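(* Let $(p,q)$ be a coprime pair of positive integers with $1\le q<p$, let $(a,b)=(p-q,q)$, and let $n_L,n_R$, the integers $a_j$ ($-n_R\le j\le n_L$, $j\ne0$) and $c$ be constructed from $(a,b)$ as in the context. Then \[[\,|a_1|,\dots,|a_{n_L}|,|c|,|a_{-n_R}|,\dots,|a_{-1}|\,]=\frac{p^2}{pq-1}\quad\text{or}\quad[\,|a_{-1}|,\dots,|a_{-n_R}|,|c|,|a_{n_L}|,\dots,|a_1|\,]=\frac{p^2}{pq-1}.\] Equivalently, the linear plumbing of disk bundles over $S^2$ with Euler numbers $a_1,\dots,a_{n_L},c,a_{-n_R},\dots,a_{-1}$ (in this order along a chain) is diffeomorphic to $C_{p,q}$.
   Context: Continued fractions: $[x_1,\dots,x_n]=x_1-\cfrac{1}{x_2-\cfrac{1}{\ddots-\cfrac{1}{x_n}}}$. $C_{p,q}$ is the linear plumbing with weights $-c_0,\dots,-c_N$ where $p^2/(pq-1)=[c_0,\dots,c_N]$ with all $c_i\ge2$. Word: set $(a_0,b_0)=(a,b)$; if $a_i>b_i$ let $w_{i+1}=L$, $(a_{i+1},b_{i+1})=(a_i-b_i,b_i)$; if $a_i<b_i$ let $w_{i+1}=R$, $(a_{i+1},b_{i+1})=(a_i,b_i-a_i)$; stop at the first $N$ with $(a_N,b_N)=(1,1)$. Let $W_i=w_{N+1-i}$, and $n_L$, $n_R$ the numbers of $L$'s and $R$'s. Sequence: each $\{a^{(i)}_j\}$ is indexed by consecutive integers $m(i)\le j\le M(i)$. Start with $(a^{(0)}_{-1},a^{(0)}_0,a^{(0)}_1)=(-1,-1,-1)$.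 For $i=1,\dots,N$, always $a^{(i)}_0=-1$, and: if $W_i=R$, set $a^{(i)}_j=a^{(i-1)}_j$ for $1<j\le M(i-1)$, $a^{(i)}_1=a^{(i-1)}_1-1$, $a^{(i)}_{-1}=-2$, $a^{(i)}_j=a^{(i-1)}_{j+1}$ for $m(i-1)-1\le j<-1$; if $W_i=L$, set $a^{(i)}_j=a^{(i-1)}_j$ for $m(i-1)\le j<-1$, $a^{(i)}_{-1}=a^{(i-1)}_{-1}-1$, $a^{(i)}_1=-2$, $a^{(i)}_j=a^{(i-1)}_{j-1}$ for $1<j\le M(i-1)+1$. After $N$ steps the index range is $-(n_R+1)\le j\le n_L+1$; put $a_j=a^{(N)}_j$ for $-n_R\le j\le n_L$, $j\neq0$, and $c=a^{(N)}_{n_L+1}+a^{(N)}_{-(n_R+1)}-2$. *)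

From HB Require Import structures.
From mathcomp Require Import all_boot all_order all_algebra.
Local Open Scope ring_scope.
Set Implicit Arguments. Unset Strict Implicit. Unset Printing Implicit Defensive.
Import Order.TTheory GRing.Theory Num.Theory.

Inductive letter := L | R.
Definition letter_eqb (x y : letter) : bool :=
  match x, y with L, L | R, R => true | _, _ => false end.

(* Euclid-type word w_1 ... w_N of (a,b): with fuel (a+b suffices, each step
   decreases a+b). Stops at (1,1). *)
Fixpoint word_fuel (fuel a b : nat) : seq letter :=
  match fuel with
  | 0 => [::]
  | f.+1 =>
      if (a == 1)%N && (b == 1)%N then [::]
      else if (b < a)%N then L :: word_fuel f (a - b)%N b
      else if (a < b)%N then R :: word_fuel f a (b - a)%N
      else [::]
  end.

Definition word (a b : nat) : seq letter := word_fuel (a + b)%N a b.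

Definition Wword (a b : nat) : seq letter := rev (word a b).

Definition n_L (a b : nat) : nat := count (letter_eqb L) (word a b).
Definition n_R (a b : nat) : nat := count (letter_eqb R) (word a b).

(* The sequence {a^(i)_j}, m(i) <= j <= M(i), is encoded by the pair
   (P, Q) with P = [:: a_1; a_2; ...; a_M] and Q = [:: a_{-1}; a_{-2}; ...; a_m];
   a_0 = -1 always. *)
Definition seq_state := (seq int * seq int)%type.

Definition seq_init : seq_state := ([:: (-1 : int)], [:: (-1 : int)]).

Definition seq_step (s : seq_state) (W : letter) : seq_state :=
  let: (P, Q) := s in
  match W with
  | R => ((head (0 : int) P - 1) :: behead P, (-2 : int) :: Q)
  | L => ((-2 : int) :: P, (head (0 : int) Q - 1) :: behead Q)
  end.

Definition seq_final (a b : nat) : seq_state := foldl seq_step seq_init (Wword a b).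

Definition aN (a b : nat) (j : int) : int :=
  let: (P, Q) := seq_final a b in
  match j with
  | Posz 0 => (-1 : int)
  | Posz k.+1 => nth 0%R P k
  | Negz k => nth 0%R Q k   (* Negz k = -(k+1) *)
  end.

Definition a_coef (a b : nat) (j : int) : int := aN a b j.

Definition c_coef (a b : nat) : int :=
  (aN a b (Posz (n_L a b).+1) + aN a b (- Posz (n_R a b).+1) - 2)%R.

Fixpoint hjcf (s : seq rat) : rat :=
  match s with
  | [::] => 0%R
  | [:: x] => x
  | x :: s' => (x - (hjcf s')^-1)%R
  end.

Definition absQ (z : int) : rat := ((absz z)%:R)%R.

Definition chain1 (a b : nat) : seq rat :=
  [seq absQ (a_coef a b (Posz j)) | j <- iota 1 (n_L a b)]
  ++ [:: absQ (c_coef a b)]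
  ++ [seq absQ (a_coef a b (- Posz j)%R) | j <- rev (iota 1 (n_R a b))].

Definition chain2 (a b : nat) : seq rat :=
  [seq absQ (a_coef a b (- Posz j)%R) | j <- iota 1 (n_R a b)]
  ++ [:: absQ (c_coef a b)]
  ++ [seq absQ (a_coef a b (Posz j)) | j <- rev (iota 1 (n_L a b))].

From mathcomp Require Import all_boot all_order all_algebra.
From mathcomp Require Import ring lra zify.
Import Order.TTheory GRing.Theory Num.Theory.
Local Open Scope ring_scope.

(* For entries [>= 2], [hjcf [:: x_1; ...; x_n] = m11 / m21] of the product of the
   matrices [[x_i, -1]; [1, 0]].  Reading the two arms of the construction as
   [Q = a_{-1}, a_{-2}, ...] and [P = a_1, a_2, ...], the product
   [K(|Q|) * join_mx * K(|rev P|)] is an explicit matrix of (a, b), since an [L] step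
   multiplies it on the left by a shear and on the right by the matrix of weight 2,
   matching the Euclid step (a - b, b) -> (a, b), and symmetrically for [R].  Its
   first column is ((a + b)^2, (a + b) b - 1) = (p^2, pq - 1), and [join_mx] glues
   the last entries of the arms into the central weight [|c|] of the second chain. *)

Record mat2 := Mat2 { m11 : rat; m12 : rat; m21 : rat; m22 : rat }.

Definition mul2 (A B : mat2) : mat2 :=
  Mat2 (m11 A * m11 B + m12 A * m21 B) (m11 A * m12 B + m12 A * m22 B)
       (m21 A * m11 B + m22 A * m21 B) (m21 A * m12 B + m22 A * m22 B).

Definition id2 : mat2 := Mat2 1 0 0 1.

Ltac mat2_ring := repeat match goal with A : mat2 |- _ => destruct A end;
  rewrite /mul2 /=; congr Mat2; ring.

Lemma mul2A A B C : mul2 A (mul2 B C) = mul2 (mul2 A B) C.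
Proof. mat2_ring. Qed.

Lemma mul1_2 A : mul2 id2 A = A.
Proof. mat2_ring. Qed.

Definition hj_mx (x : rat) : mat2 := Mat2 x (-1) 1 0.

Definition hj_prod (s : seq rat) : mat2 := foldr (fun x M => mul2 (hj_mx x) M) id2 s.

Lemma hj_prod_cons x s : hj_prod (x :: s) = mul2 (hj_mx x) (hj_prod s).
Proof. by []. Qed.

Lemma hj_prod_cat s t : hj_prod (s ++ t) = mul2 (hj_prod s) (hj_prod t).
Proof.
elim: s => [|x s IH]; first by rewrite mul1_2.
by rewrite cat_cons !hj_prod_cons IH mul2A.
Qed.

Lemma hj_prod1 x : hj_prod [:: x] = hj_mx x.
Proof. by rewrite /= /mul2 /=; congr Mat2; ring. Qed.

Lemma hj_prod_rcons s x : hj_prod (rcons s x) = mul2 (hj_prod s) (hj_mx x).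
Proof. by rewrite -cats1 hj_prod_cat hj_prod1. Qed.

Lemma hj_prod_bounds s : s != [::] -> all (fun x => 2 <= x) s ->
  1 <= m21 (hj_prod s) /\ m21 (hj_prod s) + 1 <= m11 (hj_prod s).
Proof.
elim: s => [//|x [|y s] IH] _ /andP[hx hs].
  by rewrite hj_prod1 /=; split; lra.
have := IH isT hs; rewrite hj_prod_cons; set K := hj_prod (y :: s).
rewrite /= => -[h1 h2]; nra.
Qed.

Lemma hjcf_hj_prod s : s != [::] -> all (fun x => 2 <= x) s ->
  hjcf s = m11 (hj_prod s) / m21 (hj_prod s).
Proof.
elim: s => [//|x [|y s] IH] _ /andP[hx hs].
  by rewrite hj_prod1 /= divr1.
have [h1 h2] := hj_prod_bounds (y :: s) isT hs.
have -> : hjcf [:: x, y & s] = x - (hjcf (y :: s))^-1 by [].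
rewrite IH // hj_prod_cons; move: h1 h2; set K := hj_prod (y :: s) => h1 h2.
have hK : m11 K != 0 by apply/eqP; lra.
rewrite /= invf_div; field; exact: hK.
Qed.

Lemma word_fuel_enough f g a b : (0 < a)%N -> (0 < b)%N ->
  (a + b <= f)%N -> (a + b <= g)%N -> word_fuel f a b = word_fuel g a b.
Proof.
elim: f g a b => [|f IH] [|g] a b ha hb hf hg //=; try lia.
case: ifP => // _; case: ifP => hba; first by congr cons; apply: IH; lia.
by case: ifP => hab //; congr cons; apply: IH; lia.
Qed.

Lemma wordL a b : (0 < b < a)%N -> word a b = L :: word (a - b) b.
Proof.
move=> hab; rewrite /word (_ : a + b = (a + b).-1.+1)%N /=; last lia.
rewrite (_ : (a == 1) && (b == 1) = false); last lia.
rewrite (_ : b < a = true)%N; last lia.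
by congr cons; apply: word_fuel_enough; lia.
Qed.

Lemma wordR a b : (0 < a < b)%N -> word a b = R :: word a (b - a).
Proof.
move=> hab; rewrite /word (_ : a + b = (a + b).-1.+1)%N /=; last lia.
rewrite (_ : (a == 1) && (b == 1) = false); last lia.
rewrite (_ : b < a = false)%N; last lia.
rewrite (_ : a < b = true)%N; last lia.
by congr cons; apply: word_fuel_enough; lia.
Qed.

Lemma seq_final_cons {a b w a' b'} : word a b = w :: word a' b' ->
  seq_final a b = seq_step (seq_final a' b') w.
Proof. by rewrite /seq_final /Wword => ->; rewrite rev_cons foldl_rcons. Qed.

Lemma size_foldl_seq_step W s : (0 < size s.1)%N -> (0 < size s.2)%N ->
  size (foldl seq_step s W).1 = (size s.1 + count (letter_eqb L) W)%N /\
  size (foldl seq_step s W).2 = (size s.2 + count (letter_eqb R) W)%N.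
Proof.
elim: W s => [|w W IH] [P Q] /= hP hQ; first by rewrite !addn0.
have [] := IH (seq_step (P, Q) w); case: w; case: P Q hP hQ => [|x P] [|y Q] //= _ _; lia.
Qed.

Lemma size_seq_final a b :
  size (seq_final a b).1 = (n_L a b).+1 /\ size (seq_final a b).2 = (n_R a b).+1.
Proof.
rewrite /seq_final /Wword /n_L /n_R -!(count_rev _ (word a b)).
by have [-> ->] := size_foldl_seq_step (rev (word a b)) seq_init isT isT.
Qed.

Definition negQ (z : int) : rat := - z%:~R.

Lemma negQ_subr1 z : negQ (z - 1) = negQ z + 1.
Proof. by rewrite /negQ rmorphB /=; ring. Qed.

Lemma negQN2 : negQ (-2) = 2.
Proof. by rewrite /negQ rmorphN /= opprK. Qed.

Lemma negQ_ge2 z : z <= -2 -> 2 <= negQ z.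
Proof. by move=> hz; rewrite /negQ lerNr (_ : - 2 = (-2 : int)%:~R) ?ler_int. Qed.

Lemma absQ_negQ z : z <= 0 -> absQ z = negQ z.
Proof. by move=> hz; rewrite /absQ natr_absz ler0_norm // rmorphN. Qed.

Definition is_arm (S : seq int) : Prop :=
  exists S' l, [/\ S = rcons S' l, all (fun z => z <= -2) S' & l <= -1].

Lemma is_arm_neq0 S : is_arm S -> S != [::].
Proof. by case=> S' [l [-> _ _]]; rewrite -size_eq0 size_rcons. Qed.

Lemma is_arm_cons2 S : is_arm S -> is_arm (-2 :: S).
Proof. by case=> S' [l [-> hS hl]]; exists (-2 :: S'), l. Qed.

Lemma is_arm_dec_head S : is_arm S -> is_arm ((head 0 S - 1) :: behead S).
Proof.
case=> [[|x S'] [l [-> /= hS hl]]].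
  by exists [::], (l - 1); split => //; lia.
exists ((x - 1) :: S'), l; case/andP: hS => hx hS; split => //=.
by rewrite hS andbT; lia.
Qed.

Definition shearT : mat2 := Mat2 1 1 0 1.
Definition shearU : mat2 := Mat2 1 0 (-1) 1.

(* Merges the ends of the two arms into the central vertex of weight [|c|]. *)
Definition join_mx : mat2 := Mat2 0 1 (-1) (-2).

Lemma hj_mx_join u v : mul2 (mul2 (hj_mx u) join_mx) (hj_mx v) = hj_mx (u + v + 2).
Proof. by rewrite /mul2 /=; congr Mat2; ring. Qed.

Lemma hj_prod_dec_head Q : Q != [::] ->
  hj_prod (map negQ ((head 0 Q - 1) :: behead Q)) = mul2 shearT (hj_prod (map negQ Q)).
Proof.
case: Q => [//|x Q] _ /=; rewrite negQ_subr1 mul2A; congr mul2.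
by rewrite /mul2 /=; congr Mat2; ring.
Qed.

Lemma hj_prod_rev_dec_head P : P != [::] ->
  hj_prod (map negQ (rev ((head 0 P - 1) :: behead P))) =
  mul2 (hj_prod (map negQ (rev P))) shearU.
Proof.
case: P => [//|x P] _ /=; rewrite !rev_cons !map_rcons !hj_prod_rcons negQ_subr1 -mul2A.
by congr mul2; rewrite /mul2 /=; congr Mat2; ring.
Qed.

Definition plumbing_mx (a b : nat) : mat2 :=
  let A : rat := a%:R in let B : rat := b%:R in
  Mat2 ((A + B) ^+ 2) (1 - (A + B) * A) ((A + B) * B - 1) (1 - A * B).

Lemma plumbing_mxL a b : (b <= a)%N ->
  mul2 (mul2 shearT (plumbing_mx (a - b) b)) (hj_mx 2) = plumbing_mx a b.
Proof. by move=> hba; rewrite /plumbing_mx natrB // /mul2 /=; congr Mat2; ring. Qed.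

Lemma plumbing_mxR a b : (a <= b)%N ->
  mul2 (mul2 (hj_mx 2) (plumbing_mx a (b - a))) shearU = plumbing_mx a b.
Proof. by move=> hab; rewrite /plumbing_mx natrB // /mul2 /=; congr Mat2; ring. Qed.

Definition arms_inv (a b : nat) (s : seq_state) : Prop :=
  [/\ is_arm s.1, is_arm s.2 &
      mul2 (mul2 (hj_prod (map negQ s.2)) join_mx) (hj_prod (map negQ (rev s.1)))
      = plumbing_mx a b].

Lemma arms_inv_init : arms_inv 1 1 seq_init.
Proof.
split; try by exists [::], (-1).
by rewrite /negQ /mul2 /=; congr Mat2; rewrite ?rmorphN /=; ring.
Qed.

Lemma arms_invL a b s : (b <= a)%N -> arms_inv (a - b) b s -> arms_inv a b (seq_step s L).
Proof.
case: s => P Q hba [/= hP hQ hK].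
split; [exact: is_arm_cons2 | exact: is_arm_dec_head |].
rewrite hj_prod_dec_head ?is_arm_neq0 // rev_cons map_rcons hj_prod_rcons negQN2.
by rewrite -plumbing_mxL // -hK !mul2A.
Qed.

Lemma arms_invR a b s : (a <= b)%N -> arms_inv a (b - a) s -> arms_inv a b (seq_step s R).
Proof.
case: s => P Q hab [/= hP hQ hK].
split; [exact: is_arm_dec_head | exact: is_arm_cons2 |].
rewrite hj_prod_rev_dec_head ?is_arm_neq0 // hj_prod_cons negQN2.
by rewrite -plumbing_mxR // -hK !mul2A.
Qed.

Lemma arms_inv_seq_final a b : (0 < a)%N -> (0 < b)%N -> coprime a b ->
  arms_inv a b (seq_final a b).
Proof.
elim: {a b}(a + b)%N {-2}a {-2}b (leqnn (a + b)) => [|n IH] a b hn ha hb hab; first lia.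
case: (ltngtP b a) => hba.
- rewrite (seq_final_cons (wordL a b _)) ?hb //; apply: arms_invL; first exact: ltnW.
  apply: IH; rewrite ?subn_gt0 //; first lia.
  by rewrite /coprime gcdnC -(gcdnDr b) subnK ?(ltnW hba) // gcdnC.
- rewrite (seq_final_cons (wordR a b _)) ?ha //; apply: arms_invR; first exact: ltnW.
  apply: IH; rewrite ?subn_gt0 //; first lia.
  by rewrite /coprime -(gcdnDr a) subnK ?(ltnW hba).
- move: hab; rewrite -hba /coprime gcdnn => /eqP ->.
  exact: arms_inv_init.
Qed.

Lemma map_absQ_arm (S : seq int) x (g : nat -> int) :
  (forall k, g k.+1 = nth 0 (rcons S x) k) -> all (fun z => z <= -2) S ->
  [seq absQ (g j) | j <- iota 1 (size S)] = map negQ S.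
Proof.
move=> hg hS; rewrite (iotaDl 1 0) -map_comp -{2}(mkseq_nth 0 S) /mkseq -map_comp.
apply/eq_in_map => i; rewrite mem_iota add0n => /andP[_ hi] /=.
rewrite hg nth_rcons hi absQ_negQ //.
by apply: le_trans (allP hS _ (mem_nth 0 hi)) _.
Qed.

Lemma chain2E a b Pi pl Qi ql :
  seq_final a b = (rcons Pi pl, rcons Qi ql) ->
  all (fun z => z <= -2) Pi -> all (fun z => z <= -2) Qi -> pl <= -1 -> ql <= -1 ->
  chain2 a b = map negQ Qi ++ negQ (pl + ql - 2) :: map negQ (rev Pi).
Proof.
move=> hs hP hQ hpl hql; have [hL hR] := size_seq_final a b.
rewrite hs !size_rcons in hL hR; rewrite /chain2 /c_coef.
case: hL hR => <- [<-]; congr (_ ++ _ :: _).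
- by apply: (map_absQ_arm _ ql) => // k; rewrite /a_coef /aN hs.
- rewrite /aN hs /= !nth_rcons !ltnn !eqxx absQ_negQ //; lia.
- by rewrite map_rev (map_absQ_arm _ pl) ?map_rev // => k; rewrite /a_coef /aN hs.
Qed.

Lemma hjcf_chain2 a b : arms_inv a b (seq_final a b) ->
  hjcf (chain2 a b) = m11 (plumbing_mx a b) / m21 (plumbing_mx a b).
Proof.
case hs: (seq_final a b) => [P Q].
case=> [[Pi [pl [eP hP hpl]]] [Qi [ql [eQ hQ hql]]] hK].
rewrite /= in eP eQ hK; rewrite eP eQ {P Q eP eQ} in hs hK; rewrite (chain2E _ _ _ _ _ _ hs) //.
have hc : negQ (pl + ql - 2) = negQ ql + negQ pl + 2.
  by rewrite /negQ !rmorphB !rmorphD /=; ring.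
have hge2 : all (fun x => 2 <= x) (map negQ Qi ++ negQ (pl + ql - 2) :: map negQ (rev Pi)).
  rewrite !all_cat /= !all_map all_rev negQ_ge2 /=; last lia.
  by apply/andP; split; apply/allP => z hz; apply: negQ_ge2; [exact: (allP hQ) | exact: (allP hP)].
rewrite hjcf_hj_prod //; last by case: (map negQ Qi).
rewrite -hK map_rcons rev_rcons hj_prod_cat hj_prod_cons hj_prod_rcons hc -hj_mx_join.
by rewrite [map _ (_ :: _)]/= hj_prod_cons !mul2A.
Qed.

Local Close Scope ring_scope.

Theorem lemma3p1 (p q : nat) (hq : 1 <= q) (hqp : q < p) (hcop : coprime p q) :
  let a := p - q in
  let b := q in
  hjcf (chain1 a b) = ((p%:R ^+ 2) / (p%:R * q%:R - 1) : rat)%R \/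
  hjcf (chain2 a b) = ((p%:R ^+ 2) / (p%:R * q%:R - 1) : rat)%R.
Proof.
move=> a b; right.
have hpq : (a + b = p)%N by rewrite subnK // ltnW.
have hab : coprime a b by rewrite /coprime gcdnC -(gcdnDr b) hpq gcdnC.
rewrite hjcf_chain2; last by apply: arms_inv_seq_final; rewrite ?subn_gt0.
by rewrite /plumbing_mx /= -natrD hpq.
Qed.
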